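(* (Partial resolution subformula property.) For any derivation $\mathcal{D}$ in the cut-free calculus $\mathsf{GT}^-$ of a sequent $\Gamma\Rightarrow\Delta$, each formula occurring in $\mathcal{D}$ is a subformula of a partial resolution of some formula occurring in $\Gamma,\Delta$.
   Context: Fix a countably infinite set $\mathsf{Prop}$ of propositional variables. Classical formulas are generated by $\alpha ::= p \mid \bot \mid \neg\alpha \mid \alpha\wedge\alpha \mid \alpha\vee\alpha$ with $p\in\mathsf{Prop}$. Formulas are generated by $\phi ::= \alpha \mid \phi\wedge\phi \mid \phi\vee\phi \mid \phi\mathbin{\backslash\!\!/}\phi$ where $\alpha$ is classical ($\vee$: split disjunction, $\mathbin{\backslash\!\!/}$: inquisitive disjunction). A sequent is $\Gamma\Rightarrow\Delta$ with $\Gamma,\Delta$ finite multisets of formulas; ''$\Gamma,\Delta$'' denotes multiset union. Partial resolutions: a partial resolution of a formula $\phi$ is any formula obtained from $\phi$ by a finite (possibly empty) sequence of steps, each of which replaces one occurrence of a subformula of the form $\psi_L\mathbin{\backslash\!\!/}\psi_R$ in the current formula by $\psi_L$ or by $\psi_R$. (Equivalently: label the occurrences of $\mathbin{\backslash\!\!/}$ in $\phi$ by distinct numbers; a partial resolution of degree $n$ results from successively choosing $n$ distinct labels and replacing the labelled subformula occurrence $\psi_L\mathbin{\backslash\!\!/}\psi_R$ by its left or right disjunct, leaving the formula unchanged if that occurrence no longer exists.) Deep-inference notation: for a formula $\chi$ with a designated occurrence of a subformula not in the scope of any negation, $\chi\{\eta\}$ denotes the result of replacing that occurrence by $\eta$.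 The cut-free calculus $\mathsf{GT}^-$ ($\alpha$ ranges over classical formulas, $\Lambda$ over multisets of classical formulas): axioms $\Gamma,p\Rightarrow p,\Delta$ and $\Gamma,\bot\Rightarrow\Delta$; (L$\neg$) from $\Gamma\Rightarrow\alpha,\Delta$ infer $\Gamma,\neg\alpha\Rightarrow\Delta$; (R$\neg$) from $\Gamma,\alpha\Rightarrow\Delta$ infer $\Gamma\Rightarrow\neg\alpha,\Delta$; (L$\wedge$) from $\Gamma,\phi,\psi\Rightarrow\Delta$ infer $\Gamma,\phi\wedge\psi\Rightarrow\Delta$; (R$\wedge$) from $\Gamma\Rightarrow\phi,\Lambda$ and $\Gamma\Rightarrow\psi,\Lambda$ infer $\Gamma\Rightarrow\phi\wedge\psi,\Lambda,\Delta$; (L$\vee$) from $\Gamma,\phi\Rightarrow\Lambda$ and $\Gamma,\psi\Rightarrow\Lambda$ infer $\Gamma,\phi\vee\psi\Rightarrow\Lambda,\Delta$; (R$\vee$) from $\Gamma\Rightarrow\phi,\psi,\Delta$ infer $\Gamma\Rightarrow\phi\vee\psi,\Delta$; (L$\mathbin{\backslash\!\!/}$) from $\Gamma,\chi\{\phi_L\}\Rightarrow\Delta$ and $\Gamma,\chi\{\phi_R\}\Rightarrow\Delta$ infer $\Gamma,\chi\{\phi_L\mathbin{\backslash\!\!/}\phi_R\}\Rightarrow\Delta$; (R$\mathbin{\backslash\!\!/}$) from $\Gamma\Rightarrow\chi\{\phi_i\},\Delta$ ($i\in\{L,R\}$) infer $\Gamma\Rightarrow\chi\{\phi_L\mathbin{\backslash\!\!/}\phi_R\},\Delta$.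 *)

From Stdlib Require Import List Permutation Relations.
Import ListNotations.

Inductive form : Type :=
| Var : nat -> form
| Bot : form
| Neg : form -> form
| And : form -> form -> form
| Or  : form -> form -> form      (* split (classical) disjunction *)
| Inq : form -> form -> form.

Fixpoint classical (f : form) : Prop :=
  match f with
  | Var _ | Bot => True
  | Neg a => classical a
  | And a b | Or a b => classical a /\ classical b
  | Inq _ _ => False
  end.

Fixpoint wf (f : form) : Prop :=
  match f with
  | Var _ | Bot => True
  | Neg a => classical a
  | And a b | Or a b | Inq a b => wf a /\ wf b
  end.

Inductive subform : form -> form -> Prop :=
| sub_refl : forall f, subform f f
| sub_neg : forall f a, subform f a -> subform f (Neg a)
| sub_andl : forall f a b, subform f a -> subform f (And a b)
| sub_andr : forall f a b, subform f b -> subform f (And a b)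
| sub_orl : forall f a b, subform f a -> subform f (Or a b)
| sub_orr : forall f a b, subform f b -> subform f (Or a b)
| sub_inql : forall f a b, subform f a -> subform f (Inq a b)
| sub_inqr : forall f a b, subform f b -> subform f (Inq a b).

Inductive res_step : form -> form -> Prop :=
| rs_left : forall a b, res_step (Inq a b) a
| rs_right : forall a b, res_step (Inq a b) b
| rs_neg : forall a a', res_step a a' -> res_step (Neg a) (Neg a')
| rs_andl : forall a a' b, res_step a a' -> res_step (And a b) (And a' b)
| rs_andr : forall a b b', res_step b b' -> res_step (And a b) (And a b')
| rs_orl : forall a a' b, res_step a a' -> res_step (Or a b) (Or a' b)
| rs_orr : forall a b b', res_step b b' -> res_step (Or a b) (Or a b')
| rs_inql : forall a a' b, res_step a a' -> res_step (Inq a b) (Inq a' b)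
| rs_inqr : forall a b b', res_step b b' -> res_step (Inq a b) (Inq a b').

Definition partial_resolution (phi psi : form) : Prop :=
  clos_refl_trans form res_step phi psi.

(* deep-inference contexts chi{ } : the hole is never in the scope of a negation *)
Inductive ctx : Type :=
| Hole : ctx
| CAndL : ctx -> form -> ctx
| CAndR : form -> ctx -> ctx
| COrL : ctx -> form -> ctx
| COrR : form -> ctx -> ctx
| CInqL : ctx -> form -> ctx
| CInqR : form -> ctx -> ctx.

Fixpoint plug (c : ctx) (e : form) : form :=
  match c with
  | Hole => e
  | CAndL c b => And (plug c e) b
  | CAndR a c => And a (plug c e)
  | COrL c b => Or (plug c e) b
  | COrR a c => Or a (plug c e)
  | CInqL c b => Inq (plug c e) b
  | CInqR a c => Inq a (plug c e)
  end.

(* Derivations in GT^-.  Sequents are pairs of lists read as finite multisets: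
   every rule conclusion is taken up to permutation of both sides. *)
Inductive deriv : list form -> list form -> Type :=
| ax_var : forall G D Ga De p,
    Permutation G (Var p :: Ga) -> Permutation D (Var p :: De) -> deriv G D
| ax_bot : forall G D Ga,
    Permutation G (Bot :: Ga) -> deriv G D
| r_negL : forall G D Ga a,
    classical a -> Permutation G (Neg a :: Ga) ->
    deriv Ga (a :: D) -> deriv G D
| r_negR : forall G D De a,
    classical a -> Permutation D (Neg a :: De) ->
    deriv (a :: G) De -> deriv G D
| r_andL : forall G D Ga f g,
    Permutation G (And f g :: Ga) ->
    deriv (f :: g :: Ga) D -> deriv G D
| r_andR : forall G D La De f g,
    Forall classical La -> Permutation D (And f g :: La ++ De) ->
    deriv G (f :: La) -> deriv G (g :: La) -> deriv G D
| r_orL : forall G D Ga La De f g,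
    Forall classical La -> Permutation G (Or f g :: Ga) ->
    Permutation D (La ++ De) ->
    deriv (f :: Ga) La -> deriv (g :: Ga) La -> deriv G D
| r_orR : forall G D De f g,
    Permutation D (Or f g :: De) ->
    deriv G (f :: g :: De) -> deriv G D
| r_inqL : forall G D Ga c f g,
    Permutation G (plug c (Inq f g) :: Ga) ->
    deriv (plug c f :: Ga) D -> deriv (plug c g :: Ga) D -> deriv G D
| r_inqR_l : forall G D De c f g,
    Permutation D (plug c (Inq f g) :: De) ->
    deriv G (plug c f :: De) -> deriv G D
| r_inqR_r : forall G D De c f g,
    Permutation D (plug c (Inq f g) :: De) ->
    deriv G (plug c g :: De) -> deriv G D.

Fixpoint sequents {G D} (d : deriv G D) : list (list form * list form) :=
  match d with
  | ax_var G D _ _ _ _ _ => [(G, D)]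
  | ax_bot G D _ _ => [(G, D)]
  | r_negL G D _ _ _ _ d1 => (G, D) :: sequents d1
  | r_negR G D _ _ _ _ d1 => (G, D) :: sequents d1
  | r_andL G D _ _ _ _ d1 => (G, D) :: sequents d1
  | r_andR G D _ _ _ _ _ _ d1 d2 => (G, D) :: sequents d1 ++ sequents d2
  | r_orL G D _ _ _ _ _ _ _ _ d1 d2 => (G, D) :: sequents d1 ++ sequents d2
  | r_orR G D _ _ _ _ d1 => (G, D) :: sequents d1
  | r_inqL G D _ _ _ _ _ d1 d2 => (G, D) :: sequents d1 ++ sequents d2
  | r_inqR_l G D _ _ _ _ _ d1 => (G, D) :: sequents d1
  | r_inqR_r G D _ _ _ _ _ d1 => (G, D) :: sequents d1
  end.

Definition occurs_in {G D} (d : deriv G D) (f : form) : Prop :=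
  exists s, In s (sequents d) /\ (In f (fst s) \/ In f (snd s)).

(* Every rule of GT^- is analytic up to resolution: a formula in a premise is
   either a side formula of the conclusion, an immediate subformula of the
   principal formula, or (for the rules of inquisitive disjunction) a one-step
   resolution of it.  The formulas that are subformulas of partial resolutions
   of a given list are closed under these operations, because a resolution step
   inside a subformula lifts to a resolution step of the whole formula.  The
   property therefore propagates from the endsequent to every sequent of the
   derivation. *)

From Stdlib Require Import List Permutation Relations Morphisms Setoid.
Import ListNotations.

Definition sub_resolution (L : list form) (f : form) : Prop :=
  exists g r, In g L /\ partial_resolution g r /\ subform f r.

Lemma subform_trans f g h : subform f g -> subform g h -> subform f h.
Proof. intros Hfg Hgh; induction Hgh; eauto using subform. Qed.

Lemma subform_res_step h r : subform h r ->
  forall h', res_step h h' -> exists r', res_step r r' /\ subform h' r'.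
Proof.
  intros Hhr; induction Hhr; intros h' Hstep;
    try (destruct (IHHhr h' Hstep) as [r' [Hr' Hsub]]);
    eauto using res_step, subform.
Qed.

Lemma subform_partial_resolution h h' : partial_resolution h h' ->
  forall r, subform h r -> exists r', partial_resolution r r' /\ subform h' r'.
Proof.
  unfold partial_resolution; induction 1 as [h h' Hstep | h | h1 h2 h3 _ IH12 _ IH23];
    intros r Hsub.
  - destruct (subform_res_step _ _ Hsub _ Hstep) as [r' [Hr' Hsub']].
    exists r'; split; [apply rt_step|]; assumption.
  - exists r; split; [apply rt_refl | assumption].
  - destruct (IH12 _ Hsub) as [r2 [Hr2 Hsub2]].
    destruct (IH23 _ Hsub2) as [r3 [Hr3 Hsub3]].
    exists r3; split; [eapply rt_trans|]; eassumption.
Qed.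

Lemma res_step_plug_l c f g : res_step (plug c (Inq f g)) (plug c f).
Proof. induction c; simpl; constructor; assumption. Qed.

Lemma res_step_plug_r c f g : res_step (plug c (Inq f g)) (plug c g).
Proof. induction c; simpl; constructor; assumption. Qed.

#[export] Instance sub_resolution_perm :
  Proper (@Permutation form ==> eq ==> iff) sub_resolution.
Proof.
  intros L L' HL f _ <-; unfold sub_resolution.
  setoid_rewrite HL; reflexivity.
Qed.

Lemma sub_resolution_in L f : In f L -> sub_resolution L f.
Proof.
  intros Hf; exists f, f; repeat split; [assumption | apply rt_refl | constructor].
Qed.

Lemma sub_resolution_subform L g f : In g L -> subform f g -> sub_resolution L f.
Proof.
  intros Hg Hsub; exists g, g; repeat split; [assumption | apply rt_refl | assumption].
Qed.

Lemma sub_resolution_res_step L g f : In g L -> res_step g f -> sub_resolution L f.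
Proof.
  intros Hg Hstep; exists g, f; repeat split; [assumption | apply rt_step | constructor].
  assumption.
Qed.

Lemma sub_resolution_trans L L' f : sub_resolution L' f ->
  (forall h, In h L' -> sub_resolution L h) -> sub_resolution L f.
Proof.
  intros [h [r [Hh [Hhr Hfr]]]] HL'.
  destruct (HL' h Hh) as [g [r' [Hg [Hgr' Hhr']]]].
  destruct (subform_partial_resolution _ _ Hhr _ Hhr') as [r'' [Hr'' Hrr'']].
  exists g, r''; repeat split; [assumption | | ].
  - eapply rt_trans; eassumption.
  - eapply subform_trans; eassumption.
Qed.

Lemma sub_resolution_premise L p Ps L' :
  In p L -> Forall (sub_resolution [p]) Ps -> incl L' (Ps ++ L) ->
  forall h, In h L' -> sub_resolution L h.
Proof.
  intros Hp HPs HL' h Hh.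
  destruct (in_app_or _ _ _ (HL' h Hh)) as [HhPs | HhL].
  - apply (sub_resolution_trans _ [p]); [exact (proj1 (Forall_forall _ _) HPs h HhPs) |].
    intros q [<- | []]; apply sub_resolution_in; assumption.
  - apply sub_resolution_in; assumption.
Qed.

(* [p] is the principal formula of the rule and [Ps] its active formulas in the
   premise; the conclusion must already be rewritten to a list displaying [p]. *)
Ltac by_principal p Ps :=
  apply (sub_resolution_premise _ p Ps);
  [ simpl; rewrite ?in_app_iff; simpl; tauto
  | repeat apply Forall_cons; try apply Forall_nil;
    first [ apply (sub_resolution_subform _ p); [left; reflexivity | solve [eauto using subform]]
          | apply (sub_resolution_res_step _ p);
            [left; reflexivity | apply res_step_plug_l || apply res_step_plug_r] ]
  | intros x; simpl; rewrite ?in_app_iff; simpl; rewrite ?in_app_iff; tauto ].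

Lemma occurs_in_sub_resolution G D (d : deriv G D) :
  forall f, occurs_in d f -> sub_resolution (G ++ D) f.
Proof.
  induction d as
    [ | | ? ? Ga a Ha HG d IH | ? ? De a Ha HD d IH | ? ? Ga f g HG d IH
    | ? ? La De f g HLa HD d1 IH1 d2 IH2 | ? ? Ga La De f g HLa HG HD d1 IH1 d2 IH2
    | ? ? De f g HD d IH | ? ? Ga c f g HG d1 IH1 d2 IH2
    | ? ? De c f g HD d IH | ? ? De c f g HD d IH ];
    intros h [s [Hs Hh]]; simpl in Hs;
    (destruct Hs as [<- | Hs]; [apply sub_resolution_in, in_app_iff; exact Hh |]);
    try contradiction;
    (* The permutation hypotheses are rewritten through [sub_resolution_perm];
       by induction it then remains to cover the premise by the conclusion. *)
    rewrite ?HG, ?HD; rewrite ?in_app_iff in Hs; try destruct Hs as [Hs | Hs];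
    match goal with
    | IH : forall f, occurs_in ?d f -> _, Hs : In s (sequents ?d) |- _ =>
        apply (sub_resolution_trans _ _ _ (IH h (ex_intro _ s (conj Hs Hh))))
    end.
  - by_principal (Neg a) [a].
  - by_principal (Neg a) [a].
  - by_principal (And f g) [f; g].
  - by_principal (And f g) [f].
  - by_principal (And f g) [g].
  - by_principal (Or f g) [f].
  - by_principal (Or f g) [g].
  - by_principal (Or f g) [f; g].
  - by_principal (plug c (Inq f g)) [plug c f].
  - by_principal (plug c (Inq f g)) [plug c g].
  - by_principal (plug c (Inq f g)) [plug c f].
  - by_principal (plug c (Inq f g)) [plug c g].
Qed.

Theorem proposition6p4 (G D : list form) (d : deriv G D) :
  (forall f, In f (G ++ D) -> wf f) ->
  forall f, occurs_in d f ->
  exists g r, In g (G ++ D) /\ partial_resolution g r /\ subform f r.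
Proof.
  intros _; exact (occurs_in_sub_resolution G D d).
Qed.
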